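(* Let $R$ be an associative ring with identity. The following are equivalent: (1) $R$ has stable range one; (2) for every $c \in R$ and every $x \in R$ such that $yx - 1 \in Rc$ for some $y \in R$, there exists a left unit $u \in R$ with $x - u \in Rc$; (3) for every $c \in R$ and every $x \in R$ such that $xy - 1 \in cR$ for some $y \in R$, there exists a right unit $u \in R$ with $x - u \in cR$.
   Context: A ring $R$ has stable range one if whenever $a, b, x \in R$ satisfy $ax + b = 1$, there exists $y \in R$ such that $a + by$ is a unit (invertible element) of $R$. An element $u \in R$ is a left unit if there exists $v \in R$ with $vu = 1$, and a right unit if there exists $v \in R$ with $uv = 1$. Condition (2) is what the paper calls ''every left unit lifts modulo every left principal ideal'', and condition (3) is what it calls ''every right unit lifts modulo every right principal ideal''. *)

From mathcomp Require Import all_boot all_algebra.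
Set Implicit Arguments. Unset Strict Implicit. Unset Printing Implicit Defensive.
Import GRing.Theory.
Local Open Scope ring_scope.

Definition stable_range_one (R : unitRingType) : Prop :=
  forall a b x : R, a * x + b = 1 -> exists y : R, (a + b * y) \is a GRing.unit.

Definition left_unit (R : unitRingType) (u : R) : Prop := exists v : R, v * u = 1.
Definition right_unit (R : unitRingType) (u : R) : Prop := exists v : R, u * v = 1.

Definition in_left_principal (R : unitRingType) (c z : R) : Prop := exists r : R, z = r * c.
Definition in_right_principal (R : unitRingType) (c z : R) : Prop := exists r : R, z = c * r.

From mathcomp Require Import all_boot all_algebra.
Import GRing.Theory.
Local Open Scope ring_scope.

(* Condition (3) is the stable-range condition written with the lifted right
   unit: if xy - 1 = cr then x + (1 - xy)z = x - c(rz) is a unit for some z.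
   Conversely, lifting x from ax + b = 1 modulo bR yields a + by, and lifting
   once more shows that every liftable right unit is already a unit.
   Condition (2) is condition (3) in the opposite ring, so the remaining
   ingredient is Vaserstein's theorem that stable range one is left-right
   symmetric, which comes down to an explicit two-sided inverse. *)

Definition left_units_lift (R : unitRingType) : Prop :=
  forall c x : R, (exists y : R, in_left_principal c (y * x - 1)) ->
    exists u : R, left_unit u /\ in_left_principal c (x - u).

Definition right_units_lift (R : unitRingType) : Prop :=
  forall c x : R, (exists y : R, in_right_principal c (x * y - 1)) ->
    exists u : R, right_unit u /\ in_right_principal c (x - u).

Section StableRange.

Variable R : unitRingType.
Implicit Types a b x y u v : R.

Lemma right_units_lift_converse : right_units_lift R^c <-> left_units_lift R.
Proof. exact: iff_refl. Qed.

(* With s the inverse of u = x + b y, the inverse is x + y (1 - a x): its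
   products with a and with 1 - a y are 1 - (1 - y a) b and (1 - y a) u. *)
Lemma converse_stable_unit x a b y :
  x * a + b = 1 -> (x + b * y) \is a GRing.unit ->
  (a + (1 - a * y) * (x + b * y)^-1 * b) \is a GRing.unit.
Proof.
set u := x + b * y; set s := u^-1 => xab uU.
have us : u * s = 1 by rewrite mulrV.
have su : s * u = 1 by rewrite mulVr.
have eb : b = 1 - x * a by rewrite -xab addrC addKr.
have xa : x * a = 1 - b by rewrite -xab addrK.
set v := x + y * (1 - a * x).
apply/unitrP; exists v; split.
- have va : v * a = 1 - (1 - y * a) * b.
    have axa : (1 - a * x) * a = a * b by rewrite eb mulrBl mulrBr mul1r mulr1 mulrA.
    by rewrite mulrDl -mulrA axa xa mulrBl mul1r opprB mulrA addrA addrAC.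
  have vy : v - y = (1 - y * a) * x.
    by rewrite /v mulrBr mulr1 mulrBl mul1r mulrA addrA addrAC (addrK y).
  have vay : v * (1 - a * y) = (1 - y * a) * u.
    rewrite mulrBr mulr1 mulrA va mulrBl mul1r opprB.
    by rewrite (addrCA _ ((1 - y * a) * b * y)) addrC vy -mulrA -mulrDr.
  by rewrite mulrDr !mulrA vay -(mulrA _ u) us mulr1 va subrK.
- have bv : b * v = u * (1 - a * x).
    have bx : b * x = x * (1 - a * x) by rewrite eb mulrBl mulrBr mul1r mulr1 mulrA.
    by rewrite /v mulrDr bx mulrA -mulrDl.
  rewrite mulrDl -(mulrA _ b) bv mulrA -(mulrA _ s) su mulr1.
  rewrite mulrDr mulrA mulrBl mul1r.
  by rewrite -addrA (addrC (a * y * (1 - a * x))) subrK subrKC.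
Qed.

Lemma stable_range_one_converse : stable_range_one R -> stable_range_one R^c.
Proof.
(* This is [stable_range_one R^c] read in [R]; stating it in [R] keeps the
   products below from being elaborated in the converse ring. *)
move=> sr; suff left_sr : forall a b x : R, x * a + b = 1 ->
  exists y : R, (a + y * b) \is a GRing.unit by exact left_sr.
move=> a b x xab; have [y uU] := sr x b a xab.
by exists ((1 - a * y) * (x + b * y)^-1); apply: converse_stable_unit.
Qed.

Lemma right_units_lift_unit {u v} :
  right_units_lift R -> u * v = 1 -> u \is a GRing.unit.
Proof.
move=> lift uv.
have vu_sub1 : v * u - 1 = (1 - v * u) * -1 by rewrite mulrN1 opprB.
have [w [[t wt] [r evw]]] := lift _ _ (ex_intro _ u (ex_intro _ _ vu_sub1)).
have uw : u * w = 1.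
  (* the correction term vanishes because u (1 - v u) = 0 *)
  have -> : w = v - (1 - v * u) * r by rewrite -evw subKr.
  by rewrite mulrBr uv mulrA mulrBr mulr1 mulrA uv mul1r subrr mul0r subr0.
have ut : u = t by rewrite -[u]mulr1 -wt mulrA uw mul1r.
by apply/unitrP; exists w; rewrite ut in uw *.
Qed.

Lemma stable_range_one_right_units_lift :
  stable_range_one R -> right_units_lift R.
Proof.
move=> sr c x [y [r exy]].
have [z uU] := sr x (1 - x * y) y (subrKC _ _).
exists (x + (1 - x * y) * z); split.
  by exists (x + (1 - x * y) * z)^-1; rewrite mulrV.
exists (r * z).
by rewrite opprD addrA subrr add0r -mulNr opprB exy mulrA.
Qed.

Lemma right_units_lift_stable_range_one :
  right_units_lift R -> stable_range_one R.
Proof.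
move=> lift a b x axb.
have ax_sub1 : a * x - 1 = b * -1 by rewrite mulrN1 -axb opprD addrA subrr add0r.
have [u [[v uv] [r eau]]] := lift _ _ (ex_intro _ x (ex_intro _ _ ax_sub1)).
exists (- r).
by rewrite mulrN -eau opprB addrC subrK (right_units_lift_unit lift uv).
Qed.

Lemma stable_range_one_iff_right_units_lift :
  stable_range_one R <-> right_units_lift R.
Proof.
split; [exact: stable_range_one_right_units_lift
       | exact: right_units_lift_stable_range_one].
Qed.

End StableRange.

Lemma stable_range_one_converse_iff (R : unitRingType) :
  stable_range_one R^c <-> stable_range_one R.
Proof.
split; [exact: (@stable_range_one_converse R^c) | exact: stable_range_one_converse].
Qed.

Theorem theorem3 (R : unitRingType) :
  (stable_range_one R <->
   (forall c x : R, (exists y : R, in_left_principal c (y * x - 1)) ->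
      exists u : R, left_unit u /\ in_left_principal c (x - u)))
  /\
  (stable_range_one R <->
   (forall c x : R, (exists y : R, in_right_principal c (x * y - 1)) ->
      exists u : R, right_unit u /\ in_right_principal c (x - u))).
Proof.
split; last exact: stable_range_one_iff_right_units_lift.
apply: iff_trans (right_units_lift_converse R).
apply: iff_trans (stable_range_one_iff_right_units_lift R^c).
exact: iff_sym (stable_range_one_converse_iff R).
Qed.
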